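(* Let $M\models\mathrm{AA}$, let $I\subseteq M$ be a proper cut and let $D\subseteq M$ be formula-definable. (i) If $1\le y$ for all $y\in M\setminus I$ and $M\setminus I\subseteq D$, then for each $\epsilon>0$ there exists $a\in I$ such that $[a,\infty)\subseteq D^\epsilon$. (ii) Assume $I<M\setminus I$. If for every $a\in M\setminus I$ there is $u\in (M\setminus I)\cap D$ with $u\le a$, then for every $\epsilon>0$ and every $b\in I$ there is $v\in I\cap D^\epsilon$ with $b\le v$.
   Context: Structures are complete metric spaces of diameter at most $1$ in the language $L=\{+,\cdot,\wedge,\vee,0,1\}$ (operations $1$-Lipschitz, $d$ the only relation symbol). Affine formulas are built from $1$ and atomic formulas $d(t_1,t_2)$ using $+$, scalar multiplication by reals, $\sup_x$, $\inf_x$. $\mathrm{AA}$ is the set of all closed affine conditions true in every model of first-order Peano arithmetic (formulated in $L$ with lattice operations min/max and discrete metric). $x\le y$ means $x\wedge y=x$, $x<y$ means $x\le y$, $x\ne y$; $[a,\infty)=\{u: a\le u\}$. A cut is a nonempty $I\subseteq M$ with $x\le y\in I\Rightarrow x\in I$ and $x\in I\Rightarrow x+1\in I$; proper means $I\ne M$; $I<M\setminus I$ means $x<y$ for all $x\in I$, $y\notin I$. A set $D$ is formula-definable if it is closed and $d(x,D)=\phi^M(x)$ for all $x$ for some affine formula $\phi$ with parameters from $M$. $D^\epsilon=\{x\in M: d(x,D)<\epsilon\}$. *)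

From HB Require Import structures.
From mathcomp Require Import all_boot all_order all_algebra.
From mathcomp Require Import boolp classical_sets reals Rstruct.
Set Implicit Arguments. Unset Strict Implicit. Unset Printing Implicit Defensive.
Import Order.TTheory GRing.Theory Num.Theory.
Local Open Scope ring_scope.
Local Open Scope classical_set_scope.

Notation R := Rdefinitions.R.

Record Lpre := {
  car :> Type;
  dist : car -> car -> R;
  Ladd : car -> car -> car;
  Lmul : car -> car -> car;
  Lmeet : car -> car -> car;
  Ljoin : car -> car -> car;
  Lzero : car;
  Lone : car }.

Definition lip1 (M : Lpre) (f : M -> M -> M) :=
  forall x y x' y' : M, dist (f x y) (f x' y') <= Num.max (dist x x') (dist y y').

Definition is_Lstructure (M : Lpre) : Prop :=
  [/\ [/\ (forall x y : M, 0 <= dist x y),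
      (forall x y : M, dist x y = 0 <-> x = y),
      (forall x y : M, dist x y = dist y x) &
      (forall x y z : M, dist x z <= dist x y + dist y z)],
      (forall x y : M, dist x y <= 1),
      (forall u : nat -> M,
         (forall e : R, 0 < e -> exists N, forall m n, (N <= m)%N -> (N <= n)%N ->
              dist (u m) (u n) < e) ->
         exists l : M, forall e : R, 0 < e -> exists N, forall n, (N <= n)%N ->
              dist (u n) l < e) &
      [/\ lip1 (@Ladd M), lip1 (@Lmul M), lip1 (@Lmeet M) & lip1 (@Ljoin M)]].

Inductive Lterm :=
  | TVar of nat | TZero | TOne
  | TAdd of Lterm & Lterm | TMul of Lterm & Lterm
  | TMeet of Lterm & Lterm | TJoin of Lterm & Lterm.

Inductive Aform :=
  | AOne
  | ADist of Lterm & Lterm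
  | APlus of Aform & Aform
  | AScale of R & Aform
  | ASup of nat & Aform
  | AInf of nat & Aform.

Fixpoint term_fv (n : nat) (t : Lterm) : bool :=
  match t with
  | TVar k => k == n
  | TZero | TOne => false
  | TAdd a b | TMul a b | TMeet a b | TJoin a b => term_fv n a || term_fv n b
  end.

Fixpoint form_fv (n : nat) (f : Aform) : bool :=
  match f with
  | AOne => false
  | ADist a b => term_fv n a || term_fv n b
  | APlus a b => form_fv n a || form_fv n b
  | AScale _ a => form_fv n a
  | ASup k a | AInf k a => (k != n) && form_fv n a
  end.

Definition sentence (f : Aform) : Prop := forall n, ~~ form_fv n f.

Definition upd (T : Type) (e : nat -> T) (n : nat) (a : T) : nat -> T :=
  fun k => if k == n then a else e k.

Fixpoint term_eval (M : Lpre) (e : nat -> M) (t : Lterm) : M :=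
  match t with
  | TVar k => e k
  | TZero => Lzero M
  | TOne => Lone M
  | TAdd a b => Ladd (term_eval e a) (term_eval e b)
  | TMul a b => Lmul (term_eval e a) (term_eval e b)
  | TMeet a b => Lmeet (term_eval e a) (term_eval e b)
  | TJoin a b => Ljoin (term_eval e a) (term_eval e b)
  end.

Fixpoint aeval (M : Lpre) (e : nat -> M) (f : Aform) : R :=
  match f with
  | AOne => 1
  | ADist a b => dist (term_eval e a) (term_eval e b)
  | APlus a b => aeval e a + aeval e b
  | AScale r a => r * aeval e a
  | ASup k a => sup [set aeval (upd e k x) a | x in [set: car M]]
  | AInf k a => inf [set aeval (upd e k x) a | x in [set: car M]]
  end.

Record PApre := {
  pcar :> Type;
  padd : pcar -> pcar -> pcar;
  pmul : pcar -> pcar -> pcar;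
  pzero : pcar;
  pone : pcar }.

Inductive Pterm :=
  | PVar of nat | PZero | POne | PAdd of Pterm & Pterm | PMul of Pterm & Pterm.

Inductive Pform :=
  | PEq of Pterm & Pterm
  | PBot
  | PImp of Pform & Pform
  | PAll of nat & Pform.

Fixpoint pterm_eval (N : PApre) (e : nat -> N) (t : Pterm) : N :=
  match t with
  | PVar k => e k
  | PZero => pzero N
  | POne => pone N
  | PAdd a b => padd (pterm_eval e a) (pterm_eval e b)
  | PMul a b => pmul (pterm_eval e a) (pterm_eval e b)
  end.

Fixpoint psat (N : PApre) (e : nat -> N) (f : Pform) : Prop :=
  match f with
  | PEq a b => pterm_eval e a = pterm_eval e b
  | PBot => False
  | PImp a b => psat e a -> psat e b
  | PAll k a => forall x : N, psat (upd e k x) a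
  end.

Definition PA_model (N : PApre) : Prop :=
  [/\ [/\ (forall x : N, padd x (pone N) <> pzero N),
      (forall x y : N, padd x (pone N) = padd y (pone N) -> x = y) &
      (forall x : N, padd x (pzero N) = x)],
      (forall x y : N, padd x (padd y (pone N)) = padd (padd x y) (pone N)),
      (forall x : N, pmul x (pzero N) = pzero N),
      (forall x y : N, pmul x (padd y (pone N)) = padd (pmul x y) x) &
      (forall (phi : Pform) (n : nat) (e : nat -> N),
         psat (upd e n (pzero N)) phi ->
         (forall a : N, psat (upd e n a) phi -> psat (upd e n (padd a (pone N))) phi) ->
         forall a : N, psat (upd e n a) phi)].

Definition PA_le (N : PApre) (x y : N) : Prop := exists z, padd x z = y.

Definition PA_to_L (N : PApre) : Lpre := {|
  car := pcar N;
  dist := fun x y => if `[< x = y >] then 0 else 1;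
  Ladd := @padd N;
  Lmul := @pmul N;
  Lmeet := fun x y => if `[< PA_le x y >] then x else y;
  Ljoin := fun x y => if `[< PA_le x y >] then y else x;
  Lzero := pzero N;
  Lone := pone N |}.

Definition AA (phi : Aform) : Prop :=
  sentence phi /\
  forall N : PApre, PA_model N -> forall e : nat -> N, 0 <= aeval (M := PA_to_L N) e phi.

Definition models_AA (M : Lpre) : Prop :=
  forall phi, AA phi -> forall e : nat -> M, 0 <= aeval e phi.

Definition Mle (M : Lpre) (x y : M) : Prop := Lmeet x y = x.
Definition Mlt (M : Lpre) (x y : M) : Prop := Mle x y /\ x <> y.

Definition is_cut (M : Lpre) (I : set M) : Prop :=
  [/\ I !=set0,
      (forall x y : M, Mle x y -> I y -> I x) &
      (forall x : M, I x -> I (Ladd x (Lone M)))].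

Definition proper_cut (M : Lpre) (I : set M) : Prop := is_cut I /\ I <> [set: car M].

Definition dist_set (M : Lpre) (x : M) (D : set M) : R :=
  inf [set dist x y | y in D].

Definition closed_set (M : Lpre) (D : set M) : Prop :=
  forall x : M, (forall e : R, 0 < e -> exists2 y, D y & dist x y < e) -> D x.

(* D is formula-definable: closed and d(x,D) = phi^M(x, params), x being
   variable 0 and the parameters the values of the other variables. *)
Definition formula_definable (M : Lpre) (D : set M) : Prop :=
  closed_set D /\
  exists (phi : Aform) (e : nat -> M), forall x : M, dist_set x D = aeval (upd e 0 x) phi.

Definition thicken (M : Lpre) (D : set M) (eps : R) : set M :=
  [set x | dist_set x D < eps].

From mathcomp Require Import all_boot all_order all_algebra.
From mathcomp Require Import boolp classical_sets reals Rstruct.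
From mathcomp Require Import lra zify.
From Stdlib Require Import Classical List.
Import Order.TTheory GRing.Theory Num.Theory.
Local Open Scope ring_scope.
Local Open Scope classical_set_scope.
Set Implicit Arguments. Unset Strict Implicit. Unset Printing Implicit Defensive.

(** Overspill for affine formulas.  In a model of PA with the discrete metric an
    affine formula takes only finitely many values (the same list for all models),
    and each condition [phi <= r] is first-order.  So if [V x = phi(x)] is
    non-increasing and [b <= b'], the least number principle yields a step
    [p -> p + 1] at which [V] falls to [V b'] or below, by at least the least gap
    between two values of [phi].  Taking the sup over [p] and [c = p + 1], with
    penalties that vanish at the witness, turns this into an affine sentence of
    AA.  In a model [M] of AA it therefore says: if no step [p -> p + 1] lets [V]
    drop robustly below [V b'], then [V b <= V b'].

    For (i) take [V x = sup_(w >= x) d(w, D)], for (ii) [V x = inf_(b <= w <= x)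
    d(w, D)].  Both vanish outside [I]; if the conclusion failed they would be at
    least [eps] on [I], and since [I] is closed under successor [V] could never
    drop at a step, against [V b <= V b'] for [b] in [I] and [b'] outside. *)

(** * Affine formulas and L-structures *)

Lemma upd_same (T : Type) (e : nat -> T) k a : upd e k a k = a.
Proof. by rewrite /upd eqxx. Qed.

Lemma upd_other (T : Type) (e : nat -> T) k a j : j != k -> upd e k a j = e j.
Proof. by rewrite /upd => /negbTE ->. Qed.

Ltac upd_simpl := rewrite /upd; repeat (case: eqP => ?; try lia).

Lemma upd_id (T : Type) (e : nat -> T) k : upd e k (e k) = e.
Proof. by apply: funext => j; rewrite /upd; case: eqP => [->|]. Qed.

Section SupInfImage.
Variables (T : Type) (f : T -> R).
Local Notation img := [set f x | x in [set: T]].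

Lemma le_sup_image B : (forall x, f x <= B) -> forall a, f a <= sup img.
Proof. by move=> hB a; apply: ub_le_sup; [exists B => _ [x _ <-]|exists a]. Qed.

Lemma sup_image_le B (t0 : T) : (forall x, f x <= B) -> sup img <= B.
Proof. by move=> hB; apply: ge_sup; [exists (f t0), t0|move=> _ [x _ <-]]. Qed.

Lemma inf_image_le B : (forall x, B <= f x) -> forall a, inf img <= f a.
Proof. by move=> hB a; apply: ge_inf; [exists B => _ [x _ <-]|exists a]. Qed.

Lemma le_inf_image B (t0 : T) : (forall x, B <= f x) -> B <= inf img.
Proof. by move=> hB; apply: lb_le_inf; [exists (f t0), t0|move=> _ [x _ <-]]. Qed.

End SupInfImage.

Lemma sup_eq_max (S : set R) v : S v -> (forall y, S y -> y <= v) -> sup S = v.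
Proof.
move=> Sv ubv; apply/eqP; rewrite eq_le; apply/andP; split; first by apply: ge_sup; [exists v|].
by apply: (ub_le_sup (E := S)); [exists v|].
Qed.

Lemma inf_eq_min (S : set R) v : S v -> (forall y, S y -> v <= y) -> inf S = v.
Proof.
move=> Sv lbv; apply/eqP; rewrite eq_le; apply/andP; split; last by apply: lb_le_inf; [exists v|].
by apply: (ge_inf (E := S)); [exists v|].
Qed.

Definition dist01 (M : Lpre) := forall x y : M, 0 <= dist x y <= 1.

Fixpoint form_bound (f : Aform) : R :=
  match f with
  | AOne | ADist _ _ => 1
  | APlus a b => form_bound a + form_bound b
  | AScale r a => `|r| * form_bound a
  | ASup _ a | AInf _ a => form_bound a
  end.

Section FormulaBounds.
Variable M : Lpre.
Hypothesis dM : dist01 M.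
Implicit Types (e : nat -> M) (f : Aform).

Lemma aeval_norm_le f e : `|aeval e f| <= form_bound f.
Proof.
elim: f e => [|t1 t2|a iha b ihb|r a iha|k a iha|k a iha] e /=.
- by rewrite normr1.
- by have /andP[d0 d1] := dM (term_eval e t1) (term_eval e t2); rewrite ger0_norm.
- exact: le_trans (ler_normD _ _) (lerD (iha e) (ihb e)).
- by rewrite normrM ler_wpM2l.
all: have ub x : aeval (upd e k x) a <= form_bound a
       by have := iha (upd e k x); rewrite ler_norml => /andP[].
all: have lb x : - form_bound a <= aeval (upd e k x) a
       by have := iha (upd e k x); rewrite ler_norml => /andP[].
- rewrite ler_norml (sup_image_le (Lzero M) ub) andbT.
  exact: le_trans (lb (Lzero M)) (le_sup_image ub _).
- rewrite ler_norml (le_inf_image (Lzero M) lb) /=.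
  exact: le_trans (inf_image_le lb _) (ub (Lzero M)).
Qed.

Lemma le_aeval_sup k f e x : aeval (upd e k x) f <= aeval e (ASup k f).
Proof.
apply: (@le_sup_image _ (fun y => aeval (upd e k y) f) (form_bound f)) => y.
by have := aeval_norm_le f (upd e k y); rewrite ler_norml => /andP[].
Qed.

Lemma aeval_inf_le k f e x : aeval e (AInf k f) <= aeval (upd e k x) f.
Proof.
apply: (@inf_image_le _ (fun y => aeval (upd e k y) f) (- form_bound f)) => y.
by have := aeval_norm_le f (upd e k y); rewrite ler_norml => /andP[].
Qed.

End FormulaBounds.

Lemma aeval_sup_le (M : Lpre) k f (e : nat -> M) B :
  (forall x, aeval (upd e k x) f <= B) -> aeval e (ASup k f) <= B.
Proof. exact: (sup_image_le (Lzero M)). Qed.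

Lemma le_aeval_inf (M : Lpre) k f (e : nat -> M) B :
  (forall x, B <= aeval (upd e k x) f) -> B <= aeval e (AInf k f).
Proof. exact: (le_inf_image (Lzero M)). Qed.

Section LStructure.
Variable M : Lpre.
Hypothesis HM : is_Lstructure M.
Implicit Types x y z : M.

Lemma Ldist_ge0 x y : 0 <= dist x y.
Proof. by case: HM => -[]. Qed.

Lemma Ldist_le1 x y : dist x y <= 1.
Proof. by case: HM. Qed.

Lemma Ldistxx x : dist x x = 0.
Proof. by case: HM => -[_ d0 _ _] *; apply/d0. Qed.

Lemma Ldist_eq0 x y : dist x y = 0 -> x = y.
Proof. by case: HM => -[_ d0 _ _] *; apply/d0. Qed.

Lemma LdistC x y : dist x y = dist y x.
Proof. by case: HM => -[]. Qed.

Lemma Ldist_triangle x y z : dist x z <= dist x y + dist y z.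
Proof. by case: HM => -[]. Qed.

Lemma dist01_L : dist01 M.
Proof. by move=> x y; rewrite Ldist_ge0 Ldist_le1. Qed.

Lemma Lmeet_lipl x x' u : dist (Lmeet x u) (Lmeet x' u) <= dist x x'.
Proof.
case: HM => _ _ _ [_ _ lip _]; apply: le_trans (lip _ _ _ _) _.
by rewrite Ldistxx ge_max lexx Ldist_ge0.
Qed.

Lemma Lmeet_lipr u x x' : dist (Lmeet u x) (Lmeet u x') <= dist x x'.
Proof.
case: HM => _ _ _ [_ _ lip _]; apply: le_trans (lip _ _ _ _) _.
by rewrite Ldistxx ge_max lexx Ldist_ge0.
Qed.

End LStructure.

Section EvalRules.
Variables (M : Lpre) (e : nat -> M).

Lemma aeval_one : aeval e AOne = 1. Proof. by []. Qed.
Lemma aeval_dist t1 t2 : aeval e (ADist t1 t2) = dist (term_eval e t1) (term_eval e t2).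
Proof. by []. Qed.
Lemma aeval_plus a b : aeval e (APlus a b) = aeval e a + aeval e b. Proof. by []. Qed.
Lemma aeval_scale r a : aeval e (AScale r a) = r * aeval e a. Proof. by []. Qed.
Lemma term_eval_var k : term_eval e (TVar k) = e k. Proof. by []. Qed.
Lemma term_eval_one : term_eval e TOne = Lone M. Proof. by []. Qed.
Lemma term_eval_add a b : term_eval e (TAdd a b) = Ladd (term_eval e a) (term_eval e b).
Proof. by []. Qed.
Lemma term_eval_meet a b : term_eval e (TMeet a b) = Lmeet (term_eval e a) (term_eval e b).
Proof. by []. Qed.
Lemma term_eval_join a b : term_eval e (TJoin a b) = Ljoin (term_eval e a) (term_eval e b).
Proof. by []. Qed.

End EvalRules.

Definition aevalE := (aeval_one, aeval_dist, aeval_plus, aeval_scale, term_eval_var,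
  term_eval_one, term_eval_add, term_eval_meet, term_eval_join).

Fixpoint term_vars (t : Lterm) : nat :=
  match t with
  | TVar k => k.+1
  | TZero | TOne => 0%N
  | TAdd a b | TMul a b | TMeet a b | TJoin a b => maxn (term_vars a) (term_vars b)
  end.

Fixpoint form_vars (f : Aform) : nat :=
  match f with
  | AOne => 0%N
  | ADist a b => maxn (term_vars a) (term_vars b)
  | APlus a b => maxn (form_vars a) (form_vars b)
  | AScale _ a => form_vars a
  | ASup k a | AInf k a => maxn k.+1 (form_vars a)
  end.

Lemma term_fv_lt n t : term_fv n t -> (n < term_vars t)%N.
Proof.
elim: t => [k|||a iha b ihb|a iha b ihb|a iha b ihb|a iha b ihb] //=; first by move/eqP ->.
all: by case/orP => [/iha|/ihb]; rewrite leq_max => ->; rewrite ?orbT.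
Qed.

Lemma form_fv_lt n f : form_fv n f -> (n < form_vars f)%N.
Proof.
elim: f => [|t1 t2|a iha b ihb|r a iha|k a iha|k a iha] //=.
- by case/orP => /term_fv_lt; rewrite leq_max => ->; rewrite ?orbT.
- by case/orP => [/iha|/ihb]; rewrite leq_max => ->; rewrite ?orbT.
- by case/andP => _ /iha; rewrite leq_max => ->; rewrite ?orbT.
- by case/andP => _ /iha; rewrite leq_max => ->; rewrite ?orbT.
Qed.

Lemma term_eval_ext (M : Lpre) (e1 e2 : nat -> M) t :
  (forall n, term_fv n t -> e1 n = e2 n) -> term_eval e1 t = term_eval e2 t.
Proof.
elim: t => [k||| a iha b ihb| a iha b ihb| a iha b ihb| a iha b ihb] /= h //;
  first by apply: h; rewrite eqxx.
all: by rewrite iha ?ihb // => n hn; apply: h; rewrite hn ?orbT.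
Qed.

Lemma aeval_ext (M : Lpre) f (e1 e2 : nat -> M) :
  (forall n, form_fv n f -> e1 n = e2 n) -> aeval e1 f = aeval e2 f.
Proof.
elim: f e1 e2 => [|t1 t2|a iha b ihb|r a iha|k a iha|k a iha] e1 e2 /= h //.
- by rewrite !(@term_eval_ext _ e1 e2) // => n hn; apply: h; rewrite hn ?orbT.
- by rewrite (iha e1 e2) ?(ihb e1 e2) // => n hn; apply: h; rewrite hn ?orbT.
- by rewrite (iha e1 e2).
all: congr (_ [set _ | _ in _]); apply: funext => x; apply: iha => n hn.
all: by rewrite /upd; case: eqP => // /eqP nk; apply: h; rewrite eq_sym nk.
Qed.

Lemma aeval_ext_lt (M : Lpre) f (e1 e2 : nat -> M) :
  (forall n, (n < form_vars f)%N -> e1 n = e2 n) -> aeval e1 f = aeval e2 f.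
Proof. by move=> h; apply: aeval_ext => n /form_fv_lt; apply: h. Qed.

(* [0 <= inf_close K f] is the universal closure of [0 <= f] over x_0, ..., x_(K-1). *)
Fixpoint inf_close (K : nat) (f : Aform) : Aform :=
  if K is K'.+1 then AInf K' (inf_close K' f) else f.

Lemma form_fv_inf_close n K f : form_fv n (inf_close K f) = (K <= n)%N && form_fv n f.
Proof. by elim: K => [|K ih] //=; rewrite ih andbA ltn_neqAle. Qed.

Lemma dist01_PA (N : PApre) : dist01 (PA_to_L N).
Proof. by move=> x y /=; case: asboolP => _; rewrite ?lexx ?ler01. Qed.

Lemma AA_inf_close f :
  (forall N, PA_model N -> forall e, 0 <= aeval (M := PA_to_L N) e f) ->
  AA (inf_close (form_vars f) f).
Proof.
move=> hPA; split.
  move=> n; rewrite form_fv_inf_close; apply/negP => /andP[hn /form_fv_lt].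
  by rewrite ltnNge hn.
move=> N hN; elim: (form_vars f) => [|K ih] e; first exact: hPA.
by apply: le_aeval_inf => x; apply: ih.
Qed.

Lemma AA_transfer (M : Lpre) (dM : dist01 M) (HAA : models_AA M) f :
  (forall N, PA_model N -> forall e, 0 <= aeval (M := PA_to_L N) e f) ->
  forall e : nat -> M, 0 <= aeval e f.
Proof.
move=> /AA_inf_close /HAA; elim: (form_vars f) => [|K ih] // h e.
apply: ih => e'; apply: le_trans (h e') _.
by have := aeval_inf_le dM K (inf_close K f) e' (e' K); rewrite upd_id.
Qed.

(** * Peano arithmetic *)

Definition Ptrue := PImp PBot PBot.
Definition Pnot a := PImp a PBot.
Definition Pand a b := Pnot (PImp a (Pnot b)).
Definition Por a b := PImp (Pnot a) b.
Definition Pex k a := Pnot (PAll k (Pnot a)).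
Definition Pands (l : list Pform) := fold_right Pand Ptrue l.
Definition Pors (l : list Pform) := fold_right Por PBot l.

Section PsatConnectives.
Variable N : PApre.
Implicit Types (e : nat -> N).

Lemma psat_and e a b : psat e (Pand a b) <-> psat e a /\ psat e b.
Proof.
rewrite /Pand /Pnot /=; split; last by move=> [ha hb] h; exact: h ha hb.
by move=> h; split; apply: NNPP => hn; apply: h.
Qed.

Lemma psat_or e a b : psat e (Por a b) <-> psat e a \/ psat e b.
Proof.
rewrite /Por /Pnot /=; split; last by move=> [ha|hb] // h; case: (h ha).
by move=> h; case: (classic (psat e a)) => ha; [left|right; apply: h].
Qed.

Lemma psat_ex e k a : psat e (Pex k a) <-> exists x, psat (upd e k x) a.
Proof.
rewrite /Pex /Pnot /=; split; last by move=> [x hx] h; exact: h x hx.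
by move=> h; apply: NNPP => hn; apply: h => x hx; apply: hn; exists x.
Qed.

Lemma psat_ands e l : psat e (Pands l) <-> forall a, In a l -> psat e a.
Proof.
elim: l => [|a l ih]; first by split => // _ a.
rewrite [Pands _]/= psat_and ih; split; first by move=> [ha hl] b [<-|hb]; [|apply: hl].
by move=> h; split; [apply: h; left|move=> b hb; apply: h; right].
Qed.

Lemma psat_ors e l : psat e (Pors l) <-> exists a, In a l /\ psat e a.
Proof.
elim: l => [|a l ih]; first by split => [[]|[x []]].
rewrite [Pors _]/= psat_or ih; split.
  by case=> [ha|[b [hb hb']]]; [exists a; split; [left|]|exists b; split; [right|]].
by move=> [b [[<-|hb] hb']]; [left|right; exists b].
Qed.

End PsatConnectives.

Fixpoint pterm_vars (s : Pterm) : nat :=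
  match s with
  | PVar k => k.+1
  | PZero | POne => 0%N
  | PAdd a b | PMul a b => maxn (pterm_vars a) (pterm_vars b)
  end.

Lemma pterm_eval_ext (N : PApre) (e1 e2 : nat -> N) s :
  (forall k, (k < pterm_vars s)%N -> e1 k = e2 k) -> pterm_eval e1 s = pterm_eval e2 s.
Proof.
elim: s => [k|||a iha b ihb|a iha b ihb] /= h //; first by apply: h; rewrite ltnSn.
all: by rewrite iha ?ihb // => k hk; apply: h; rewrite leq_max hk ?orbT.
Qed.

Definition Ple s1 s2 :=
  let z := maxn (pterm_vars s1) (pterm_vars s2) in Pex z (PEq (PAdd s1 (PVar z)) s2).

Lemma psat_Ple (N : PApre) (e : nat -> N) s1 s2 :
  psat e (Ple s1 s2) <-> PA_le (pterm_eval e s1) (pterm_eval e s2).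
Proof.
rewrite /Ple psat_ex /=; set z := maxn _ _.
have fresh s x : (pterm_vars s <= z)%N -> pterm_eval (upd e z x) s = pterm_eval e s.
  move=> hs; apply: pterm_eval_ext => k hk; rewrite upd_other //.
  by apply/eqP => hkz; move: hk; rewrite hkz ltnNge hs.
by split=> -[x hx]; exists x; move: hx; rewrite /= upd_same !fresh ?leq_maxl ?leq_maxr.
Qed.

Section PeanoArithmetic.
Local Open Scope nat_scope.
Variable N : PApre.
Hypothesis hN : PA_model N.
Local Notation "a +p b" := (padd a b) (at level 50, left associativity).
Local Notation p1 := (pone N).
Local Notation p0 := (pzero N).

Lemma PA_succ_neq0 x : x +p p1 <> p0.
Proof. by case: hN => -[]. Qed.

Lemma PA_succ_inj x y : x +p p1 = y +p p1 -> x = y.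
Proof. by case: hN => -[_ inj _] *; apply: inj. Qed.

Lemma PA_addn0 x : x +p p0 = x.
Proof. by case: hN => -[]. Qed.

Lemma PA_addnS x y : x +p (y +p p1) = (x +p y) +p p1.
Proof. by case: hN. Qed.

Lemma PA_ind (phi : Pform) n (e : nat -> N) :
  psat (upd e n p0) phi ->
  (forall a, psat (upd e n a) phi -> psat (upd e n (a +p p1)) phi) ->
  forall a, psat (upd e n a) phi.
Proof. by case: hN => _ _ _ _; apply. Qed.

Lemma PA_add0n (x : N) : p0 +p x = x.
Proof.
apply: (@PA_ind (PEq (PAdd PZero (PVar 0)) (PVar 0)) 0 (fun _ => x)) => [|a] /=.
  by rewrite upd_same PA_addn0.
by rewrite upd_same PA_addnS => ->.
Qed.

Lemma PA_addSn b z : (b +p p1) +p z = (b +p z) +p p1.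
Proof.
apply: (@PA_ind (PEq (PAdd (PAdd (PVar 1) POne) (PVar 0)) (PAdd (PAdd (PVar 1) (PVar 0)) POne))
   0 (fun _ => b)) => [|a] /=; rewrite /upd /=; first by rewrite !PA_addn0.
by rewrite !PA_addnS => ->.
Qed.

Lemma PA_addnA (x y z : N) : (x +p y) +p z = x +p (y +p z).
Proof.
apply: (@PA_ind (PEq (PAdd (PAdd (PVar 1) (PVar 2)) (PVar 0))
                     (PAdd (PVar 1) (PAdd (PVar 2) (PVar 0))))
   0 (fun k => if k == 1 then x else y)) => [|a] /=; rewrite /upd /=; first by rewrite !PA_addn0.
by rewrite !PA_addnS => ->.
Qed.

Lemma PA_le_refl (x : N) : PA_le x x.
Proof. by exists p0; rewrite PA_addn0. Qed.

Lemma PA_le_trans (x y z : N) : PA_le x y -> PA_le y z -> PA_le x z.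
Proof. by move=> [u <-] [v <-]; exists (u +p v); rewrite PA_addnA. Qed.

Lemma PA_le_succ x y : PA_le x y -> PA_le x (y +p p1).
Proof. by move=> [u <-]; exists (u +p p1); rewrite PA_addnS. Qed.

Lemma PA_succ_nle x : ~ PA_le (x +p p1) x.
Proof.
have := @PA_ind (PAll 1 (Pnot (PEq (PAdd (PAdd (PVar 0) POne) (PVar 1)) (PVar 0)))) 0 (fun _ => x).
rewrite /upd /= => h [z hz]; move: z hz; apply: h => [z|a ih z].
  by rewrite PA_addSn PA_add0n => /PA_succ_neq0.
by rewrite PA_addSn => /PA_succ_inj /ih.
Qed.

Lemma PA_zero_or_succ (z : N) : z = p0 \/ exists z', z = z' +p p1.
Proof.
pose phi := Por (PEq (PVar 0) PZero) (Pex 1 (PEq (PVar 0) (PAdd (PVar 1) POne))).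
have base : psat (upd (fun _ => z) 0 p0) phi by apply/psat_or; left; rewrite /= upd_same.
have step a : psat (upd (fun _ => z) 0 a) phi -> psat (upd (fun _ => z) 0 (a +p p1)) phi.
  by move=> _; apply/psat_or; right; apply/psat_ex; exists a; rewrite /= upd_other // !upd_same.
have := PA_ind base step z; rewrite psat_or psat_ex /= upd_same.
by case=> [->|[z' hz]]; [left|right; exists z'; move: hz; rewrite upd_other // !upd_same].
Qed.

Lemma PA_le_total (x y : N) : PA_le x y \/ PA_le y x.
Proof.
pose tot := Por (Ple (PVar 0) (PVar 1)) (Ple (PVar 1) (PVar 0)).
have totE (e : nat -> N) : psat e tot <-> PA_le (e 0) (e 1) \/ PA_le (e 1) (e 0).
  by rewrite psat_or !psat_Ple.
pose e a := upd (fun _ => x) 0 a.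
have base : psat (e p0) (PAll 1 tot).
  move=> z; apply/totE; rewrite /e !upd_same upd_other // upd_same.
  by left; exists z; rewrite PA_add0n.
have step a : psat (e a) (PAll 1 tot) -> psat (e (a +p p1)) (PAll 1 tot).
  move=> ha z; apply/totE; have /totE := ha z.
  rewrite /e !upd_same !(@upd_other _ _ 1) // !upd_same.
  case=> [[w <-]|hza]; last by right; apply: PA_le_succ.
  case: (PA_zero_or_succ w) => [->|[w' ->]].
    by right; rewrite PA_addn0; apply/PA_le_succ/PA_le_refl.
  by left; exists w'; rewrite PA_addnS PA_addSn.
have /totE := PA_ind base step x y.
by rewrite !upd_same upd_other // upd_same.
Qed.

End PeanoArithmetic.

(** * Affine formulas in discrete models of PA *)

Definition flat_pairs (A B C : Type) (f : A -> B -> list C) (l1 : list A) (l2 : list B) :=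
  flat_map (fun a => flat_map (f a) l2) l1.

Lemma In_flat_pairs (A B C : Type) (f : A -> B -> list C) l1 l2 c :
  In c (flat_pairs f l1 l2) <-> exists a b, [/\ In a l1, In b l2 & In c (f a b)].
Proof.
rewrite /flat_pairs in_flat_map; split.
  by move=> [a [ha]]; rewrite in_flat_map => -[b [hb hc]]; exists a, b.
by move=> [a [b [ha hb hc]]]; exists a; split => //; rewrite in_flat_map; exists b.
Qed.

(* [term_cases t] and [form_cases f] are lists of pairs (guard, value) such that,
   in every model of PA and every valuation, some guard holds and every guard that
   holds gives the value of [t] (as a PA term) or of [f]. *)
Fixpoint term_cases (t : Lterm) : list (Pform * Pterm) :=
  match t with
  | TVar k => [:: (Ptrue, PVar k)]
  | TZero => [:: (Ptrue, PZero)]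
  | TOne => [:: (Ptrue, POne)]
  | TAdd a b => flat_pairs (fun x y => [:: (Pand x.1 y.1, PAdd x.2 y.2)])
                  (term_cases a) (term_cases b)
  | TMul a b => flat_pairs (fun x y => [:: (Pand x.1 y.1, PMul x.2 y.2)])
                  (term_cases a) (term_cases b)
  | TMeet a b => flat_pairs (fun x y => [:: (Pand (Pand x.1 y.1) (Ple x.2 y.2), x.2);
                                          (Pand (Pand x.1 y.1) (Pnot (Ple x.2 y.2)), y.2)])
                   (term_cases a) (term_cases b)
  | TJoin a b => flat_pairs (fun x y => [:: (Pand (Pand x.1 y.1) (Ple x.2 y.2), y.2);
                                          (Pand (Pand x.1 y.1) (Pnot (Ple x.2 y.2)), x.2)])
                   (term_cases a) (term_cases b)
  end.

Section TermCases.
Variable N : PApre.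
Implicit Types (e : nat -> N).

Lemma term_cases_sound t e gs : In gs (term_cases t) -> psat e gs.1 ->
  term_eval (M := PA_to_L N) e t = pterm_eval e gs.2.
Proof.
elim: t gs => [k|||a iha b ihb|a iha b ihb|a iha b ihb|a iha b ihb] gs /=;
  try by case=> // <-.
1,2: move/In_flat_pairs=> [x [y [hx hy [<-|[]]]]] /psat_and [h1 h2] /=;
  by rewrite (iha x) // (ihb y).
all: move/In_flat_pairs=> [x [y [hx hy [<-|[<-|[]]]]]] /psat_and [/psat_and [h1 h2] h3] /=;
  rewrite (iha x) // (ihb y) //; case: asboolP => // hle;
  first [by case: hle; apply/psat_Ple | by case: h3; apply/psat_Ple].
Qed.

Lemma term_cases_cover t e : exists gs, In gs (term_cases t) /\ psat e gs.1.
Proof.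
elim: t => [k|||a [x [hx hx']] b [y [hy hy']]|a [x [hx hx']] b [y [hy hy']]
              |a [x [hx hx']] b [y [hy hy']]|a [x [hx hx']] b [y [hy hy']]] /=;
  try by eexists; split; [left|].
- exists (Pand x.1 y.1, PAdd x.2 y.2); rewrite psat_and In_flat_pairs.
  by split => //; exists x, y; split => //; left.
- exists (Pand x.1 y.1, PMul x.2 y.2); rewrite psat_and In_flat_pairs.
  by split => //; exists x, y; split => //; left.
all: case: (classic (psat e (Ple x.2 y.2))) => hle.
- exists (Pand (Pand x.1 y.1) (Ple x.2 y.2), x.2); rewrite !psat_and In_flat_pairs.
  by split => //; exists x, y; split => //; left.
- exists (Pand (Pand x.1 y.1) (Pnot (Ple x.2 y.2)), y.2); rewrite !psat_and In_flat_pairs.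
  by split => //; exists x, y; split => //; right; left.
- exists (Pand (Pand x.1 y.1) (Ple x.2 y.2), y.2); rewrite !psat_and In_flat_pairs.
  by split => //; exists x, y; split => //; left.
- exists (Pand (Pand x.1 y.1) (Pnot (Ple x.2 y.2)), x.2); rewrite !psat_and In_flat_pairs.
  by split => //; exists x, y; split => //; right; left.
Qed.

End TermCases.

Lemma exists_list_argmax (A : Type) (rank : A -> R) (P : A -> Prop) l :
  (exists a, In a l /\ P a) ->
  exists a, [/\ In a l, P a & forall b, In b l -> P b -> rank b <= rank a].
Proof.
elim: l => [|x l ih]; first by move=> [a [[]]].
move=> hex; case: (classic (exists a, In a l /\ P a)) => [/ih [m [hm hPm hmax]]|hno].
  case: (classic (P x /\ rank m < rank x)) => [[hPx hlt]|hn].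
    exists x; split => //; first by left.
    by move=> b [<-|hb] hPb //; apply: le_trans (hmax b hb hPb) (ltW hlt).
  exists m; split => //; first by right.
  move=> b [<-|hb] hPb; last exact: hmax.
  by rewrite leNgt; apply/negP => hlt; apply: hn.
have hPx : P x by case: hex => a [[<-|ha] hPa] //; case: hno; exists a.
exists x; split => //; first by left.
by move=> b [<-|hb] hPb //; case: hno; exists b.
Qed.

(* Guard of the sup (rank = id) or inf (rank = -id) over x_k of a formula with
   cases [L]: the case [gv] is realised by some x_k and no case of larger rank is
   realised by any x_k. *)
Definition extremum_case k (rank : R -> R) (L : list (Pform * R)) (gv : Pform * R) :=
  (Pand (Pex k gv.1)
     (PAll k (Pands (map (fun p => Pnot p.1) (filter (fun p => rank gv.2 < rank p.2) L)))),
   gv.2).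

Section ExtremumCase.
Variables (N : PApre) (k : nat) (rank : R -> R) (a : Aform) (L : list (Pform * R)).
Implicit Types (e : nat -> N).
Hypothesis L_sound : forall e gv, In gv L -> psat e gv.1 -> aeval (M := PA_to_L N) e a = gv.2.
Hypothesis L_cover : forall e, exists gv, In gv L /\ psat e gv.1.

Lemma extremum_case_sound e gv : In gv L -> psat e (extremum_case k rank L gv).1 ->
  (exists x, aeval (M := PA_to_L N) (upd e k x) a = gv.2) /\
  (forall x, rank (aeval (M := PA_to_L N) (upd e k x) a) <= rank gv.2).
Proof.
move=> hgv /psat_and [/psat_ex [x0 hx0] hall]; split; first by exists x0; apply: L_sound.
move=> x; have [w [hw hw']] := L_cover (upd e k x); rewrite (L_sound hw hw') leNgt.
apply/negP => hlt; apply: (proj1 (psat_ands _ _) (hall x) (Pnot w.1)) => //.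
by apply/in_map_iff; exists w; split => //; apply/filter_In.
Qed.

Lemma extremum_case_cover e : exists gv, In gv L /\ psat e (extremum_case k rank L gv).1.
Proof.
have [x [hx hPx hmax]] : exists gv, [/\ In gv L, exists x, psat (upd e k x) gv.1 &
    forall w, In w L -> (exists x, psat (upd e k x) w.1) -> rank w.2 <= rank gv.2].
  apply: exists_list_argmax; have [w [hw hw']] := L_cover (upd e k (pzero N)).
  by exists w; split => //; exists (pzero N).
exists x; split => //; apply/psat_and; split; first exact/psat_ex.
move=> z; apply/psat_ands => q /in_map_iff [w [<- /filter_In [hw hlt]]] hwz.
by have := hmax w hw (ex_intro _ z hwz); rewrite leNgt hlt.
Qed.

End ExtremumCase.

Fixpoint form_cases (f : Aform) : list (Pform * R) :=
  match f with
  | AOne => [:: (Ptrue, 1)]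
  | ADist t1 t2 => flat_pairs (fun x y => [:: (Pand (Pand x.1 y.1) (PEq x.2 y.2), 0);
                                            (Pand (Pand x.1 y.1) (Pnot (PEq x.2 y.2)), 1)])
                     (term_cases t1) (term_cases t2)
  | APlus a b => flat_pairs (fun x y => [:: (Pand x.1 y.1, x.2 + y.2)])
                   (form_cases a) (form_cases b)
  | AScale r a => map (fun x => (x.1, r * x.2)) (form_cases a)
  | ASup k a => map (extremum_case k id (form_cases a)) (form_cases a)
  | AInf k a => map (extremum_case k -%R (form_cases a)) (form_cases a)
  end.

Section FormCases.
Variable N : PApre.
Implicit Types (e : nat -> N).
Local Notation L := (PA_to_L N).

Lemma form_cases_spec f :
  (forall e gv, In gv (form_cases f) -> psat e gv.1 -> aeval (M := L) e f = gv.2) /\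
  (forall e, exists gv, In gv (form_cases f) /\ psat e gv.1).
Proof.
elim: f => [|t1 t2|a [sa ca] b [sb cb]|r a [sa ca]|k a [sa ca]|k a [sa ca]]; split => e.
- by move=> gv [<-|[]].
- by exists (Ptrue, 1); split; [left|].
- move=> gv /In_flat_pairs [x [y [hx hy [<-|[<-|[]]]]]] /psat_and [/psat_and [h1 h2] h3] /=;
  rewrite (term_cases_sound hx h1) (term_cases_sound hy h2); case: asboolP => // hne;
  first [by case: (hne h3) | by case: (h3 hne)].
- have [x [hx hx']] := term_cases_cover t1 e; have [y [hy hy']] := term_cases_cover t2 e.
  case: (classic (pterm_eval e x.2 = pterm_eval e y.2)) => heq.
    exists (Pand (Pand x.1 y.1) (PEq x.2 y.2), 0); rewrite !psat_and In_flat_pairs.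
    by split => //; exists x, y; split => //; left.
  exists (Pand (Pand x.1 y.1) (Pnot (PEq x.2 y.2)), 1); rewrite !psat_and In_flat_pairs.
  by split => //; exists x, y; split => //; right; left.
- move=> gv /In_flat_pairs [x [y [hx hy [<-|[]]]]] /psat_and [h1 h2] /=.
  by rewrite (sa e x) // (sb e y).
- have [x [hx hx']] := ca e; have [y [hy hy']] := cb e.
  exists (Pand x.1 y.1, x.2 + y.2); rewrite psat_and In_flat_pairs.
  by split => //; exists x, y; split => //; left.
- by move=> gv /in_map_iff [x [<- hx]] h /=; rewrite (sa e x).
- have [x [hx hx']] := ca e; exists (x.1, r * x.2); split => //.
  by apply/in_map_iff; exists x.
- move=> gv /in_map_iff [x [<- hx]] /(extremum_case_sound sa ca hx) [[x0 hx0] hmax] /=.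
  by apply: sup_eq_max => [|_ [z _ <-]]; [exists x0|apply: hmax].
- have [x [hx hsat]] := extremum_case_cover k id ca e.
  by exists (extremum_case k id (form_cases a) x); split => //; apply/in_map_iff; exists x.
- move=> gv /in_map_iff [x [<- hx]] /(extremum_case_sound sa ca hx) [[x0 hx0] hmax] /=.
  by apply: inf_eq_min => [|_ [z _ <-]]; [exists x0|rewrite -lerN2; apply: hmax].
- have [x [hx hsat]] := extremum_case_cover k -%R ca e.
  by exists (extremum_case k -%R (form_cases a) x); split => //; apply/in_map_iff; exists x.
Qed.

Lemma form_cases_sound f e gv :
  In gv (form_cases f) -> psat e gv.1 -> aeval (M := L) e f = gv.2.
Proof. exact: (proj1 (form_cases_spec f)). Qed.

Lemma form_cases_cover f e : exists gv, In gv (form_cases f) /\ psat e gv.1.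
Proof. exact: (proj2 (form_cases_spec f)). Qed.

Lemma PA_aeval_value f e : In (aeval (M := L) e f) (map snd (form_cases f)).
Proof.
have [gv [hin hs]] := form_cases_cover f e; rewrite (form_cases_sound hin hs).
by apply/in_map_iff; exists gv.
Qed.

Definition Pvalue_le f (v : R) :=
  Pors (map fst (filter (fun p => p.2 <= v) (form_cases f))).

Lemma psat_Pvalue_le f v e : psat e (Pvalue_le f v) <-> aeval (M := L) e f <= v.
Proof.
rewrite /Pvalue_le psat_ors; split.
  move=> [q [/in_map_iff [gv [<- /filter_In [hin hle]]] hq]].
  by rewrite (form_cases_sound hin hq).
move=> hle; have [gv [hin hs]] := form_cases_cover f e; exists gv.1; split => //.
apply/in_map_iff; exists gv; split => //; apply/filter_In; split => //.
by rewrite -(form_cases_sound hin hs).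
Qed.

End FormCases.

Lemma list_pos_lb (l : list R) : exists m, 0 < m /\ forall d, In d l -> 0 < d -> m <= d.
Proof.
elim: l => [|x l [m [hm hl]]]; first by exists 1.
have [hx|hx] := boolP (0 < x); last first.
  by exists m; split => // d [<-|hd] hd0; [rewrite hd0 in hx|exact: hl].
exists (Num.min x m); split; first by rewrite lt_min hx hm.
by move=> d [<-|hd] hd0; rewrite ge_min ?lexx // hl ?orbT.
Qed.

Lemma list_ub (l : list R) : exists m, 0 <= m /\ forall d, In d l -> d <= m.
Proof.
elim: l => [|x l [m [hm hl]]]; first by exists 0.
exists (Num.max x m); split; first by rewrite le_max hm orbT.
by move=> d [<-|hd]; rewrite le_max ?lexx // hl ?orbT.
Qed.

Lemma list_gap_spread (l : list R) : exists gap spread, [/\ 0 < gap, 0 <= spread,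
  (forall v1 v2, In v1 l -> In v2 l -> v2 < v1 -> gap <= v1 - v2) &
  (forall v1 v2, In v1 l -> In v2 l -> v1 - v2 <= spread)].
Proof.
pose diffs := flat_map (fun v1 => map (fun v2 => v1 - v2) l) l.
have In_diffs v1 v2 : In v1 l -> In v2 l -> In (v1 - v2) diffs.
  by move=> h1 h2; apply/in_flat_map; exists v1; split => //; apply/in_map_iff; exists v2.
have [gap [hgap hgapl]] := list_pos_lb diffs; have [spread [hs0 hspread]] := list_ub diffs.
exists gap, spread; split => // v1 v2 h1 h2; last exact/hspread/In_diffs.
by move=> hlt; apply: hgapl; [exact: In_diffs|rewrite subr_gt0].
Qed.

Section DiscreteOrderStructure.
Variable N : PApre.
Hypothesis hN : PA_model N.
Local Notation NL := (PA_to_L N).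
Implicit Types a b c x y : N.

Lemma PA_LaddE x y : Ladd (l := NL) x y = padd x y.
Proof. by []. Qed.

Lemma PA_LoneE : Lone NL = pone N.
Proof. by []. Qed.

Lemma PA_dist_xx x : dist (l := NL) x x = 0.
Proof. by rewrite /=; case: asboolP. Qed.

Lemma PA_dist_neq x y : x <> y -> dist (l := NL) x y = 1.
Proof. by move=> h /=; case: asboolP. Qed.

Lemma PA_dist_sym x y : dist (l := NL) x y = dist (l := NL) y x.
Proof. by rewrite /=; do 2 case: asboolP => //; move=> h1 h2; [case: h1|case: h2]. Qed.

Lemma PA_meet_le x y : PA_le x y -> Lmeet (l := NL) x y = x.
Proof. by move=> h /=; case: asboolP. Qed.

Lemma PA_meet_nle x y : ~ PA_le x y -> Lmeet (l := NL) x y = y.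
Proof. by move=> h /=; case: asboolP. Qed.

Lemma PA_join_le x y : PA_le x y -> Ljoin (l := NL) x y = y.
Proof. by move=> h /=; case: asboolP. Qed.

Lemma PA_join_nle x y : ~ PA_le x y -> Ljoin (l := NL) x y = x.
Proof. by move=> h /=; case: asboolP. Qed.

Lemma PA_meetxx x : Lmeet (l := NL) x x = x.
Proof. exact/PA_meet_le/PA_le_refl. Qed.

Lemma PA_le_of_meet a c : Lmeet (l := NL) a c = a -> PA_le a c.
Proof. by rewrite /=; case: asboolP => // _ <-; apply: PA_le_refl. Qed.

Lemma PA_le_meetr a c : PA_le (Lmeet (l := NL) a c) c.
Proof. by rewrite /=; case: asboolP => // _; apply: PA_le_refl. Qed.

Lemma PA_le_join a b c : PA_le a c -> PA_le b c -> PA_le (Ljoin (l := NL) a b) c.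
Proof. by rewrite /=; case: asboolP. Qed.

Lemma PA_dist_ge0 x y : 0 <= dist (l := NL) x y.
Proof. by have /andP[] := dist01_PA x y. Qed.

Lemma PA_dist_le1 x y : dist (l := NL) x y <= 1.
Proof. by have /andP[] := dist01_PA x y. Qed.

End DiscreteOrderStructure.

(** * Overspill *)

Definition step_value (M : Lpre) (V : M -> R) (L C2 C4 : R) (b b' p c : M) : R :=
  V p - V c - L * (V c - V b') - C2 * dist c (Ladd p (Lone M)) - C4 * dist (Lmeet b p) b.

Section PAStepWitness.
Variables (N : PApre) (V : PA_to_L N -> R) (gap spread : R).
Hypothesis hN : PA_model N.
Hypothesis V_antitone : forall a a', PA_le a a' -> V a' <= V a.
Hypothesis V_first_drop : forall b r n, V (padd b n) <= r -> exists n',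
  V (padd b n') <= r /\ (n' = pzero N \/ exists m, n' = padd m (pone N) /\ r < V (padd b m)).
Hypothesis gap_gt0 : 0 < gap.
Hypothesis V_gap : forall a a', V a' < V a -> gap <= V a - V a'.
Hypothesis V_spread : forall a a', V a - V a' <= spread.

(* If [b <= b'], either [V b <= V b'] already, or at the last [p] of [[b, b']]
   with [V p > V b'] the value drops by at least [gap >= g * spread] at the next
   step.  If not [b <= b'], the last term of the sentence pays for everything. *)
Lemma PA_step_witness L C2 C4 : 0 <= L -> forall b b', exists p c,
  gap / (spread + 1) * (V b - V b') -
  (gap / (spread + 1) * spread + spread + L * spread) * dist (Lmeet b b') b
  <= step_value V L C2 C4 b b' p c.
Proof.
move=> hL b b'; set g := gap / (spread + 1).
have spread_ge0 : 0 <= spread by have := V_spread b b; rewrite subrr.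
have g_gt0 : 0 < g by rewrite divr_gt0 //; lra.
have gV a a' : g * (V a - V a') <= g * spread by rewrite ler_pM2l.
have LV a a' : L * (V a - V a') <= L * spread by apply: ler_wpM2l.
have g_spread : g * spread <= gap.
  rewrite /g mulrAC ler_pdivrMr; last lra.
  by apply: ler_wpM2l; [exact: ltW|lra].
have [le_bb'|nle_bb'] := classic (PA_le b b'); last first.
  rewrite PA_meet_nle // PA_dist_neq; last first.
    by move=> eb; apply: nle_bb'; rewrite eb; apply: PA_le_refl hN _.
  exists b, (padd b (pone N)).
  rewrite /step_value PA_LaddE PA_LoneE !PA_dist_xx (PA_meetxx hN) PA_dist_xx.
  have := LV (padd b (pone N)) b'; have := gV b b'; have := V_spread (padd b (pone N)) b; lra.
rewrite PA_meet_le // PA_dist_xx.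
have [n1 ebn1] := le_bb'.
have Vn1 : V (padd b n1) <= V b' by rewrite ebn1.
have [n [Vn [n0|[m [nm Vm]]]]] := V_first_drop Vn1; subst n.
  exists b', (padd b' (pone N)).
  rewrite /step_value PA_LaddE PA_LoneE !PA_dist_xx PA_meet_le // PA_dist_xx.
  move: Vn; rewrite PA_addn0 // => Vb.
  have Vb'_succ := V_antitone (PA_le_succ hN (PA_le_refl hN b')).
  have := ler_wpM2l hL Vb'_succ; have := ler_wpM2l (ltW g_gt0) Vb; lra.
exists (padd b m), (padd (padd b m) (pone N)).
rewrite /step_value PA_LaddE PA_LoneE PA_dist_xx PA_meet_le; last by exists m.
rewrite PA_dist_xx -(PA_addnS hN); have := V_gap Vm; have := gV b b'.
have := ler_wpM2l hL Vn; lra.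
Qed.

End PAStepWitness.

(* In the overspill sentence
   the variables [n0], [n0.+1], [n0.+2], [n0.+3] hold [b], [b'], [p] and [c]. *)
Section OverspillFormula.
Variables (Phi : nat -> Aform) (n0 : nat).
Hypothesis Phi_rename : forall (M : Lpre) (e e' : nat -> M) y y', (n0 <= y)%N -> (n0 <= y')%N ->
  (forall k, (k < n0)%N -> e k = e' k) -> e y = e' y' -> aeval e (Phi y) = aeval e' (Phi y').

Definition step_form L C2 C4 :=
  APlus (Phi n0.+2) (APlus (AScale (-1) (Phi n0.+3))
   (APlus (AScale (- L) (APlus (Phi n0.+3) (AScale (-1) (Phi n0.+1))))
   (APlus (AScale (- C2) (ADist (TVar n0.+3) (TAdd (TVar n0.+2) TOne)))
          (AScale (- C4) (ADist (TMeet (TVar n0) (TVar n0.+2)) (TVar n0)))))).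

Definition overspill_form g L C2 C4 C5 :=
  APlus (ASup n0.+2 (ASup n0.+3 (step_form L C2 C4)))
   (APlus (AScale (- g) (APlus (Phi n0) (AScale (-1) (Phi n0.+1))))
          (AScale C5 (ADist (TMeet (TVar n0) (TVar n0.+1)) (TVar n0)))).

Definition family_value (M : Lpre) (e0 : nat -> M) (a : M) := aeval (upd e0 n0 a) (Phi n0).

Section FamilyValue.
Variables (M : Lpre) (e0 : nat -> M).
Local Notation V := (family_value e0).
Local Notation agree e := (forall k, (k < n0)%N -> e k = e0 k).

Lemma aeval_Phi (e : nat -> M) y : (n0 <= y)%N -> agree e -> aeval e (Phi y) = V (e y).
Proof.
move=> hy he; apply: Phi_rename => // [k hk|]; last by rewrite upd_same.
by rewrite upd_other ?he //; lia.
Qed.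

Lemma aeval_step_form L C2 C4 (e : nat -> M) p c : agree e ->
  aeval (upd (upd e n0.+2 p) n0.+3 c) (step_form L C2 C4) =
  step_value V L C2 C4 (e n0) (e n0.+1) p c.
Proof.
move=> he; set e' := upd (upd e n0.+2 p) n0.+3 c.
have PhiE y : (n0 <= y)%N -> aeval e' (Phi y) = V (e' y).
  by move=> hy; apply: aeval_Phi => // k hk; rewrite -he // /e'; upd_simpl.
rewrite /step_form /step_value !aevalE !PhiE; try lia.
have -> : e' n0.+3 = c by rewrite /e'; upd_simpl.
have -> : e' n0.+2 = p by rewrite /e'; upd_simpl.
have -> : e' n0.+1 = e n0.+1 by rewrite /e'; upd_simpl.
have -> : e' n0 = e n0 by rewrite /e'; upd_simpl.
lra.
Qed.

Lemma aeval_overspill_form g L C2 C4 C5 (e : nat -> M) : agree e ->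
  aeval e (overspill_form g L C2 C4 C5) =
  aeval e (ASup n0.+2 (ASup n0.+3 (step_form L C2 C4))) - g * (V (e n0) - V (e n0.+1))
  + C5 * dist (Lmeet (e n0) (e n0.+1)) (e n0).
Proof.
by move=> he; rewrite /overspill_form !aevalE !(aeval_Phi (e := e)) //; try lia; lra.
Qed.

End FamilyValue.

Hypothesis Phi_antitone : forall (N : PApre) (e : nat -> N), PA_model N ->
  forall a a', PA_le a a' ->
  family_value (M := PA_to_L N) e a' <= family_value (M := PA_to_L N) e a.

Section PAFamily.
Variables (N : PApre) (e : nat -> N).
Hypothesis hN : PA_model N.
Local Notation V := (family_value (M := PA_to_L N) e).

(* The least number principle for the definable set of [a] with [V (b + a) <= r]. *)
Lemma PA_first_drop b r n : V (padd b n) <= r -> exists n',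
  V (padd b n') <= r /\ (n' = pzero N \/ exists m, n' = padd m (pone N) /\ r < V (padd b m)).
Proof.
move=> Vn; apply: NNPP => no_drop.
pose Q := PAll n0 (PImp (PEq (PVar n0) (PAdd (PVar n0.+2) (PVar n0.+1)))
                        (Pnot (Pvalue_le (Phi n0) r))).
pose eQ a := upd (upd e n0.+2 b) n0.+1 a.
have QE a : psat (eQ a) Q <-> ~ V (padd b a) <= r.
  have VE x : aeval (M := PA_to_L N) (upd (eQ a) n0 x) (Phi n0) = V x.
    by rewrite (aeval_Phi (M := PA_to_L N) (e0 := e)) ?upd_same // => k hk; rewrite /eQ; upd_simpl.
  have bE x : upd (eQ a) n0 x n0.+2 = b by rewrite /eQ; upd_simpl.
  have aE x : upd (eQ a) n0 x n0.+1 = a by rewrite /eQ; upd_simpl.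
  split => [hQ Vle|nle x].
    apply: (hQ (padd b a)); first by rewrite /= upd_same bE aE.
    by apply/psat_Pvalue_le; rewrite VE.
  by rewrite /= upd_same bE aE => -> /psat_Pvalue_le; rewrite VE.
have all_above a : ~ V (padd b a) <= r.
  apply/QE; move: a; apply: (PA_ind hN) => [|a /QE Va]; apply/QE => Vle; apply: no_drop.
    by exists (pzero N); split => //; left.
  exists (padd a (pone N)); split => //; right; exists a; split => //.
  by rewrite ltNge; apply/negP.
exact: all_above Vn.
Qed.

End PAFamily.

Lemma PA_overspill_valid : exists g, 0 < g /\ forall L C2 C4, 0 <= L -> exists C5,
  forall (N : PApre), PA_model N -> forall e : nat -> N,
    0 <= aeval (M := PA_to_L N) e (overspill_form g L C2 C4 C5).
Proof.
have [gap [spread [gap_gt0 spread_ge0 hgap hspread]]] :=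
  list_gap_spread (map snd (form_cases (Phi n0))).
exists (gap / (spread + 1)); split; first by rewrite divr_gt0 //; lra.
move=> L C2 C4 hL; exists (gap / (spread + 1) * spread + spread + L * spread) => N hN e.
have Vl a : In (family_value (M := PA_to_L N) e a) (map snd (form_cases (Phi n0))).
  exact: PA_aeval_value.
have [p [c hpc]] := PA_step_witness hN (@Phi_antitone N e hN) (PA_first_drop (e := e) hN) gap_gt0
  (fun a a' => hgap _ _ (Vl a) (Vl a')) (fun a a' => hspread _ _ (Vl a) (Vl a'))
  C2 C4 hL (e n0) (e n0.+1).
rewrite (aeval_overspill_form (M := PA_to_L N) (e0 := e)) //.
have := le_aeval_sup (@dist01_PA N) n0.+2 (ASup n0.+3 (step_form L C2 C4)) e p.
have := le_aeval_sup (@dist01_PA N) n0.+3 (step_form L C2 C4) (upd e n0.+2 p) c.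
rewrite (aeval_step_form (M := PA_to_L N) (e0 := e)) //; lra.
Qed.

Section AAOverspill.
Variables (M : Lpre) (e0 : nat -> M).
Hypothesis HM : is_Lstructure M.
Hypothesis HAA : models_AA M.
Local Notation V := (family_value e0).

Lemma AA_overspill L C2 C4 b b' : 0 <= L -> Mle b b' ->
  (forall p c, step_value V L C2 C4 b b' p c <= 0) -> V b <= V b'.
Proof.
move=> hL le_bb' step_le0.
have [g [g_gt0 hC5]] := PA_overspill_valid; have [C5 valid] := hC5 L C2 C4 hL.
pose e := upd (upd e0 n0 b) n0.+1 b'.
have agree k : (k < n0)%N -> e k = e0 k by move=> hk; rewrite /e; upd_simpl.
have := AA_transfer (dist01_L HM) HAA valid e; rewrite (aeval_overspill_form (e0 := e0)) //.
have eb : e n0 = b by rewrite /e; upd_simpl.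
have eb' : e n0.+1 = b' by rewrite /e upd_same.
rewrite eb eb' le_bb' Ldistxx // mulr0 addr0.
have : aeval e (ASup n0.+2 (ASup n0.+3 (step_form L C2 C4))) <= 0.
  apply: aeval_sup_le => p; apply: aeval_sup_le => c.
  by rewrite (aeval_step_form (e0 := e0)) // eb eb'.
move=> S_le0 h; have : g * (V b - V b') <= 0 by lra.
by rewrite pmulr_rle0 // subr_le0.
Qed.

End AAOverspill.
End OverspillFormula.

(** * Lattice facts in models of AA *)

Definition env_of (M : Lpre) (l : list M) : nat -> M := fun k => List.nth k l (Lzero M).

Section AALattice.
Variable M : Lpre.
Hypothesis HM : is_Lstructure M.
Hypothesis HAA : models_AA M.
Implicit Types b p u w x y : M.

Lemma AA_aeval_le f1 f2 :
  (forall N, PA_model N -> forall e : nat -> PA_to_L N, aeval e f1 <= aeval e f2) ->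
  forall e : nat -> M, aeval e f1 <= aeval e f2.
Proof.
move=> hPA e.
have PA_nonneg N : PA_model N -> forall e' : nat -> PA_to_L N,
    0 <= aeval e' (APlus f2 (AScale (-1) f1)).
  by move=> hN e' /=; have := hPA N hN e'; lra.
by have /= := AA_transfer (dist01_L HM) HAA PA_nonneg e; lra.
Qed.

Lemma AA_term_eq t1 t2 :
  (forall N, PA_model N -> forall e : nat -> PA_to_L N, term_eval e t1 = term_eval e t2) ->
  forall e : nat -> M, term_eval e t1 = term_eval e t2.
Proof.
move=> hPA e; apply: (Ldist_eq0 HM); apply/eqP; rewrite eq_le Ldist_ge0 // andbT.
have := AA_aeval_le (f1 := ADist t1 t2) (f2 := AScale 0 AOne) _ e.
rewrite !aevalE mul0r; apply=> N hN e'.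
by rewrite !aevalE hPA // PA_dist_xx mul0r.
Qed.

Lemma Mmeetxx x : Lmeet x x = x.
Proof.
apply: (AA_term_eq (t1 := TMeet (TVar 0) (TVar 0)) (t2 := TVar 0) _ (env_of [:: x])).
by move=> N hN e; rewrite !aevalE PA_meetxx.
Qed.

Lemma MleUl b y : Mle b (Ljoin b y).
Proof.
apply: (AA_term_eq (t1 := TMeet (TVar 0) (TJoin (TVar 0) (TVar 1))) (t2 := TVar 0) _
  (env_of [:: b; y])) => N hN e; rewrite !aevalE.
have [le01|nle01] := classic (PA_le (e 0%N) (e 1%N)).
  by rewrite PA_join_le // PA_meet_le.
by rewrite PA_join_nle // PA_meetxx.
Qed.

Lemma MleUr b y : Mle y (Ljoin b y).
Proof.
apply: (AA_term_eq (t1 := TMeet (TVar 1) (TJoin (TVar 0) (TVar 1))) (t2 := TVar 1) _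
  (env_of [:: b; y])) => N hN e; rewrite !aevalE.
have [le01|nle01] := classic (PA_le (e 0%N) (e 1%N)).
  by rewrite PA_join_le // PA_meetxx.
rewrite PA_join_nle // PA_meet_le //.
by case: (PA_le_total hN (e 0%N) (e 1%N)).
Qed.

Lemma MleIr w x : Mle (Lmeet w x) x.
Proof.
apply: (AA_term_eq (t1 := TMeet (TMeet (TVar 0) (TVar 1)) (TVar 1)) (t2 := TMeet (TVar 0) (TVar 1))
  _ (env_of [:: w; x])) => N hN e; rewrite !aevalE.
exact/PA_meet_le/PA_le_meetr.
Qed.

Lemma dist_join_le x u : dist (Ljoin x u) u <= dist (Lmeet x u) x.
Proof.
apply: (AA_aeval_le (f1 := ADist (TJoin (TVar 0) (TVar 1)) (TVar 1))
  (f2 := ADist (TMeet (TVar 0) (TVar 1)) (TVar 0)) _ (env_of [:: x; u])) => N hN e; rewrite !aevalE.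
have [le01|nle01] := classic (PA_le (e 0%N) (e 1%N)).
  by rewrite PA_join_le // PA_dist_xx PA_dist_ge0.
by rewrite PA_join_nle // PA_meet_nle // PA_dist_sym.
Qed.

Lemma dist_meet_succ_le b p : dist (Lmeet b (Ladd p (Lone M))) b <= dist (Lmeet b p) b.
Proof.
apply: (AA_aeval_le (f1 := ADist (TMeet (TVar 0) (TAdd (TVar 1) TOne)) (TVar 0))
  (f2 := ADist (TMeet (TVar 0) (TVar 1)) (TVar 0)) _ (env_of [:: b; p])) => N hN e; rewrite !aevalE.
have [le01|nle01] := classic (PA_le (e 0%N) (e 1%N)).
  rewrite PA_LaddE PA_LoneE PA_meet_le; last exact: PA_le_succ.
  by rewrite PA_dist_xx PA_dist_ge0.
rewrite (PA_meet_nle nle01) (PA_dist_neq (x := e 1%N)) ?PA_dist_le1 // => e10.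
by apply: nle01; rewrite e10; apply: PA_le_refl.
Qed.

Lemma one_le_dist_join_succ b x w :
  1 <= dist (Ljoin b x) x + dist (Lmeet (Ladd x (Lone M)) (Ljoin b (Lmeet w x))) (Ladd x (Lone M)).
Proof.
apply: (AA_aeval_le (f1 := AOne) (f2 := APlus (ADist (TJoin (TVar 0) (TVar 1)) (TVar 1))
  (ADist (TMeet (TAdd (TVar 1) TOne) (TJoin (TVar 0) (TMeet (TVar 2) (TVar 1))))
         (TAdd (TVar 1) TOne))) _ (env_of [:: b; x; w])) => N hN e; rewrite !aevalE.
rewrite !PA_LaddE PA_LoneE.
set B := e 0%N; set X := e 1%N; set W := e 2%N.
have [eBX|neBX] := classic (Ljoin (l := PA_to_L N) B X = X); last first.
  by rewrite (PA_dist_neq neBX) lerDl PA_dist_ge0.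
have le_BX : PA_le B X.
  apply: NNPP => nle; have := eBX; rewrite PA_join_nle // => eBX'.
  by apply: nle; rewrite eBX'; apply: PA_le_refl.
rewrite eBX PA_dist_xx add0r PA_dist_neq // => /(PA_le_of_meet hN) le_succ.
apply: (PA_succ_nle hN (x := X)); apply: PA_le_trans le_succ _ => //.
by apply: PA_le_join => //; apply: PA_le_meetr.
Qed.

End AALattice.

Section DistSet.
Variables (M : Lpre) (D : set M) (y0 : M).
Hypothesis HM : is_Lstructure M.
Hypothesis Dy0 : D y0.
Implicit Types v w y : M.

Lemma dist_set_ge0 w : 0 <= dist_set w D.
Proof.
apply: lb_le_inf; first by exists (dist w y0), y0.
by move=> _ [y _ <-]; apply: Ldist_ge0.
Qed.

Lemma dist_set_le w y : D y -> dist_set w D <= dist w y.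
Proof.
move=> Dy; apply: (ge_inf (E := [set dist w y | y in D])); last by exists y.
by exists 0 => _ [z _ <-]; apply: Ldist_ge0.
Qed.

Lemma dist_set_le1 w : dist_set w D <= 1.
Proof. exact: le_trans (dist_set_le w Dy0) (Ldist_le1 HM _ _). Qed.

Lemma dist_set_mem y : D y -> dist_set y D = 0.
Proof.
move=> Dy; apply/eqP; rewrite eq_le dist_set_ge0 andbT.
by have := dist_set_le y Dy; rewrite Ldistxx.
Qed.

Lemma dist_set_lip w v : dist_set w D <= dist w v + dist_set v D.
Proof.
suff : dist_set w D - dist w v <= dist_set v D by lra.
apply: lb_le_inf; first by exists (dist v y0), y0.
by move=> _ [y Dy <-]; have := dist_set_le w Dy; have := Ldist_triangle HM w v y; lra.
Qed.

End DistSet.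

Lemma aeval_sup_congr (M : Lpre) (e e' : nat -> M) k k' f f' :
  (forall x, aeval (upd e k x) f = aeval (upd e' k' x) f') ->
  aeval e (ASup k f) = aeval e' (ASup k' f').
Proof. by move=> h /=; congr (sup [set _ | _ in _]); apply: funext. Qed.

Lemma aeval_inf_congr (M : Lpre) (e e' : nat -> M) k k' f f' :
  (forall x, aeval (upd e k x) f = aeval (upd e' k' x) f') ->
  aeval e (AInf k f) = aeval e' (AInf k' f').
Proof. by move=> h /=; congr (inf [set _ | _ in _]); apply: funext. Qed.

Section Templates.
Variable phi : Aform.
Local Notation m := (form_vars phi).

(* With the discrete metric [d(y /\ w, y)] is 0 iff [y <= w]: these encode
   [sup_(w >= y) d(w, D)] and, with the variable [m.+1] holding [b],
   [inf_(b <= w <= y) d(w, D)] by penalties. *)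
Definition sup_above_form (y : nat) :=
  ASup 0 (APlus phi (AScale (-1) (ADist (TMeet (TVar y) (TVar 0)) (TVar y)))).

Definition inf_between_form (y : nat) :=
  AInf 0 (APlus phi (APlus (AScale 2 (ADist (TMeet (TVar m.+1) (TVar 0)) (TVar m.+1)))
                           (AScale 2 (ADist (TMeet (TVar 0) (TVar y)) (TVar 0))))).

Lemma sup_above_form_rename (M : Lpre) (e e' : nat -> M) y y' :
  (m.+2 <= y)%N -> (m.+2 <= y')%N -> (forall k, (k < m.+2)%N -> e k = e' k) -> e y = e' y' ->
  aeval e (sup_above_form y) = aeval e' (sup_above_form y').
Proof.
move=> hy hy' he hyy; apply: aeval_sup_congr => x; rewrite !aevalE !upd_same.
rewrite !(upd_other _ _ (j := y)) ?(upd_other _ _ (j := y')); try lia.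
rewrite hyy (@aeval_ext_lt _ _ (upd e 0 x) (upd e' 0 x)) // => k hk.
by rewrite /upd; case: eqP => // _; apply: he; lia.
Qed.

Lemma inf_between_form_rename (M : Lpre) (e e' : nat -> M) y y' :
  (m.+2 <= y)%N -> (m.+2 <= y')%N -> (forall k, (k < m.+2)%N -> e k = e' k) -> e y = e' y' ->
  aeval e (inf_between_form y) = aeval e' (inf_between_form y').
Proof.
move=> hy hy' he hyy; apply: aeval_inf_congr => x; rewrite !aevalE !upd_same.
rewrite !(upd_other _ _ (j := y)) ?(upd_other _ _ (j := y')) ?(upd_other _ _ (j := m.+1));
  try lia.
rewrite hyy (he m.+1) // (@aeval_ext_lt _ _ (upd e 0 x) (upd e' 0 x)) // => k hk.
by rewrite /upd; case: eqP => // _; apply: he; lia.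
Qed.

Lemma sup_above_form_antitone (N : PApre) (e : nat -> PA_to_L N) : PA_model N ->
  forall a a', PA_le a a' ->
  family_value sup_above_form m.+2 e a' <= family_value sup_above_form m.+2 e a.
Proof.
move=> hN a a' le_aa'; apply: aeval_sup_le => w.
apply: le_trans (le_aeval_sup (@dist01_PA N) _ _ _ w).
rewrite !aevalE (@aeval_ext_lt _ _ (upd (upd e m.+2 a') 0 w) (upd (upd e m.+2 a) 0 w));
  last by move=> k hk; upd_simpl.
have -> : upd (upd e m.+2 a') 0 w m.+2 = a' by upd_simpl.
have -> : upd (upd e m.+2 a) 0 w m.+2 = a by upd_simpl.
rewrite !upd_same lerD2l !mulN1r lerN2.
have [ea'|nea'] := classic (Lmeet (l := PA_to_L N) a' w = a'); last first.
  by rewrite (PA_dist_neq nea') PA_dist_le1.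
rewrite ea' PA_dist_xx PA_meet_le ?PA_dist_xx //.
exact: PA_le_trans le_aa' (PA_le_of_meet hN ea').
Qed.

Lemma inf_between_form_antitone (N : PApre) (e : nat -> PA_to_L N) : PA_model N ->
  forall a a', PA_le a a' ->
  family_value inf_between_form m.+2 e a' <= family_value inf_between_form m.+2 e a.
Proof.
move=> hN a a' le_aa'; apply: le_aeval_inf => w.
apply: le_trans (aeval_inf_le (@dist01_PA N) _ _ _ w) _.
rewrite !aevalE (@aeval_ext_lt _ _ (upd (upd e m.+2 a') 0 w) (upd (upd e m.+2 a) 0 w));
  last by move=> k hk; upd_simpl.
have -> : upd (upd e m.+2 a') 0 w m.+2 = a' by upd_simpl.
have -> : upd (upd e m.+2 a) 0 w m.+2 = a by upd_simpl.
have -> : upd (upd e m.+2 a') 0 w m.+1 = upd (upd e m.+2 a) 0 w m.+1 by upd_simpl.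
rewrite !upd_same !lerD2l ler_pM2l //.
have [ea|nea] := classic (Lmeet (l := PA_to_L N) w a = w); last first.
  by rewrite (PA_dist_neq nea) PA_dist_le1.
rewrite ea PA_dist_xx PA_meet_le ?PA_dist_xx //.
exact: PA_le_trans (PA_le_of_meet hN ea) le_aa'.
Qed.

End Templates.

Lemma lipschitz_step_le0 (eps K Vp Vc Vs d : R) :
  0 < eps -> 0 <= K -> Vp <= K -> eps <= Vs -> Vs <= Vc + 2 * d ->
  Vp - Vc - K / eps * Vc - 2 * (1 + K / eps) * d <= 0.
Proof.
move=> eps_gt0 K_ge0 VpK epsVs Vs_le.
have KE : (1 + K / eps) * eps = eps + K by rewrite mulrDl mul1r mulfVK ?gt_eqF.
have Keps_ge0 : 0 <= K / eps by rewrite divr_ge0 // ltW.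
have : (1 + K / eps) * eps <= (1 + K / eps) * (Vc + 2 * d) by apply: ler_wpM2l; lra.
rewrite KE; lra.
Qed.

Section CutAndDefinableSet.
Variables (M : Lpre) (I D : set M) (phi : Aform) (e0 : nat -> M) (a0 y0 y1 : M).
Hypothesis HM : is_Lstructure M.
Hypothesis HAA : models_AA M.
Hypothesis I_down : forall x y, Mle x y -> I y -> I x.
Hypothesis I_succ : forall x, I x -> I (Ladd x (Lone M)).
Hypothesis Ia0 : I a0.
Hypothesis Iy1 : ~ I y1.
Hypothesis Dy0 : D y0.
Hypothesis phi_dist : forall x, dist_set x D = aeval (upd e0 0 x) phi.
Local Notation m := (form_vars phi).

Lemma aeval_phi (e : nat -> M) w : (forall k, (0 < k < m)%N -> e k = e0 k) ->
  aeval (upd e 0 w) phi = dist_set w D.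
Proof.
move=> he; rewrite phi_dist; apply: aeval_ext_lt => k hk.
by rewrite /upd; case: eqP => // /eqP k0; apply: he; lia.
Qed.

Section SupAbove.
Hypothesis out_D : forall y, ~ I y -> D y.
Local Notation F := (family_value (sup_above_form phi) m.+2 e0).

Lemma sup_above_body x w :
  aeval (upd (upd e0 m.+2 x) 0 w)
    (APlus phi (AScale (-1) (ADist (TMeet (TVar m.+2) (TVar 0)) (TVar m.+2))))
  = dist_set w D - dist (Lmeet x w) x.
Proof.
rewrite !aevalE aeval_phi; last by move=> k hk; upd_simpl.
rewrite upd_same upd_other // upd_same; lra.
Qed.

Lemma sup_above_ge x w : dist_set w D - dist (Lmeet x w) x <= F x.
Proof. by rewrite -sup_above_body; apply: (le_aeval_sup (dist01_L HM) 0). Qed.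

Lemma sup_above_le x B : (forall w, dist_set w D - dist (Lmeet x w) x <= B) -> F x <= B.
Proof. by move=> h; apply: aeval_sup_le => w; rewrite sup_above_body. Qed.

Lemma sup_above_ge0 x : 0 <= F x.
Proof.
apply: le_trans (sup_above_ge x x); rewrite (Mmeetxx HM HAA) Ldistxx // subr0.
exact: (dist_set_ge0 HM Dy0 x).
Qed.

Lemma sup_above_le1 x : F x <= 1.
Proof.
apply: sup_above_le => w; have := dist_set_le1 HM Dy0 w.
have := Ldist_ge0 HM (Lmeet x w) x; lra.
Qed.

Lemma sup_above_out x : ~ I x -> F x = 0.
Proof.
move=> Ix; apply/eqP; rewrite eq_le sup_above_ge0 andbT; apply: sup_above_le => w.
have Ixw : ~ I (Ljoin x w) by move=> h; apply: Ix; apply: I_down h; apply: MleUl.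
have := dist_set_lip HM Dy0 w (Ljoin x w).
rewrite (dist_set_mem HM Dy0 (out_D Ixw)) addr0 (LdistC HM).
have := dist_join_le HM HAA x w; lra.
Qed.

Lemma sup_above_lip x z : F z <= F x + 2 * dist x z.
Proof.
apply: sup_above_le => w; have := sup_above_ge x w.
have := Ldist_triangle HM (Lmeet x w) (Lmeet z w) x.
have := Ldist_triangle HM (Lmeet z w) z x.
have := Lmeet_lipl HM x z w; rewrite (LdistC HM z x); lra.
Qed.

Lemma sup_above_step eps : 0 < eps -> (forall a, I a -> eps <= F a) ->
  forall b b', ~ I b' -> forall p c, step_value F (1 / eps) (2 * (1 + 1 / eps)) 0 b b' p c <= 0.
Proof.
move=> eps_gt0 far b b' Ib' p c; rewrite /step_value (sup_above_out Ib') mul0r.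
have Fc_ge0 := sup_above_ge0 c; have d_ge0 := Ldist_ge0 HM c (Ladd p (Lone M)).
have L_ge0 : 0 <= 1 / eps by rewrite divr_ge0 // ltW.
have [Ip|Ip] := classic (I p); last first.
  rewrite (sup_above_out Ip).
  by have := mulr_ge0 L_ge0 Fc_ge0; have := mulr_ge0 L_ge0 d_ge0; lra.
have := lipschitz_step_le0 eps_gt0 ler01 (sup_above_le1 p) (far _ (I_succ Ip))
  (sup_above_lip c (Ladd p (Lone M))); lra.
Qed.

Lemma thicken_contains_tail eps : 0 < eps ->
  exists a, I a /\ forall u, Mle a u -> thicken D eps u.
Proof.
move=> eps_gt0; apply: NNPP => no_a.
have far a : I a -> eps <= F a.
  move=> Ia; apply: NNPP => Flt; apply: no_a; exists a; split => // u le_au.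
  rewrite /thicken /= ltNge; apply/negP => le_eps; apply: Flt.
  by have := sup_above_ge a u; rewrite le_au Ldistxx //; lra.
have Iy : ~ I (Ljoin a0 y1) by move=> h; apply: Iy1; apply: I_down h; apply: MleUr.
have L_ge0 : 0 <= 1 / eps by rewrite divr_ge0 // ltW.
have := AA_overspill (@sup_above_form_rename phi) (@sup_above_form_antitone phi) HM HAA
  L_ge0 (MleUl HM HAA a0 y1) (sup_above_step eps_gt0 far a0 Iy).
by rewrite (sup_above_out Iy); have := far a0 Ia0; lra.
Qed.

End SupAbove.

Section InfBetween.
Variable b : M.
Hypothesis Ib : I b.
Hypothesis I_below : forall x y, I x -> ~ I y -> Mlt x y.
Hypothesis D_coinitial : forall a, ~ I a -> exists u, [/\ ~ I u, D u & Mle u a].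
Local Notation e1 := (upd e0 m.+1 b).
Local Notation H := (family_value (inf_between_form phi) m.+2 e1).

Lemma inf_between_body x w :
  aeval (upd (upd e1 m.+2 x) 0 w)
    (APlus phi (APlus (AScale 2 (ADist (TMeet (TVar m.+1) (TVar 0)) (TVar m.+1)))
                      (AScale 2 (ADist (TMeet (TVar 0) (TVar m.+2)) (TVar 0)))))
  = dist_set w D + 2 * dist (Lmeet b w) b + 2 * dist (Lmeet w x) w.
Proof.
rewrite !aevalE aeval_phi; last by move=> k hk; upd_simpl.
have -> : upd (upd e1 m.+2 x) 0 w m.+1 = b by upd_simpl.
rewrite upd_same upd_other // upd_same; lra.
Qed.

Lemma inf_between_le x w : H x <= dist_set w D + 2 * dist (Lmeet b w) b + 2 * dist (Lmeet w x) w.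
Proof. by rewrite -inf_between_body; apply: (aeval_inf_le (dist01_L HM) 0). Qed.

Lemma inf_between_ge x B :
  (forall w, B <= dist_set w D + 2 * dist (Lmeet b w) b + 2 * dist (Lmeet w x) w) -> B <= H x.
Proof. by move=> h; apply: le_aeval_inf => w; rewrite inf_between_body. Qed.

Lemma inf_between_ge0 x : 0 <= H x.
Proof.
apply: inf_between_ge => w; have := dist_set_ge0 HM Dy0 w.
have := Ldist_ge0 HM (Lmeet b w) b; have := Ldist_ge0 HM (Lmeet w x) w; lra.
Qed.

Lemma inf_between_out x : ~ I x -> H x = 0.
Proof.
move=> Ix; apply/eqP; rewrite eq_le inf_between_ge0 andbT.
have [u [Iu Du le_ux]] := D_coinitial Ix; have [le_bu _] := I_below Ib Iu.
have := inf_between_le x u; rewrite le_bu le_ux !Ldistxx // (dist_set_mem HM Dy0 Du); lra.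
Qed.

Lemma inf_between_lip x z : H z <= H x + 2 * dist x z.
Proof.
suff : H z - 2 * dist x z <= H x by lra.
apply: inf_between_ge => w; have := inf_between_le z w.
have := Ldist_triangle HM (Lmeet w z) (Lmeet w x) w; have := Lmeet_lipr HM w z x.
rewrite (LdistC HM z x); lra.
Qed.

Lemma inf_between_le_dist x : H x <= 1 + 2 * dist (Lmeet b x) b.
Proof.
have := inf_between_le x b; rewrite (Mmeetxx HM HAA) Ldistxx //.
have := dist_set_le1 HM Dy0 b; rewrite (LdistC HM (Lmeet b x) b); lra.
Qed.

Section Far.
Variable eps : R.
Hypothesis far : forall v, I v -> Mle b v -> eps <= dist_set v D.

(* [Ljoin b (Lmeet w x)] lies in [I], being below [x + 1], and above [b], so it is
   [eps]-far from [D]; when the penalties are small [w] is close to it. *)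
Lemma inf_between_far x : I x -> dist (Lmeet b x) b < 1 -> eps <= H x.
Proof.
move=> Ix bx_lt1; apply: inf_between_ge => w; set v := Lmeet w x.
have Iv : I v by apply: I_down Ix; apply: MleIr.
have Ibv : I (Ljoin b v).
  apply: NNPP => Ibv; have [le_x1 _] := I_below (I_succ Ix) Ibv.
  have := one_le_dist_join_succ HM HAA b x w; rewrite -/v le_x1 Ldistxx //.
  have := dist_join_le HM HAA b x; lra.
have := far Ibv (MleUl HM HAA b v).
have := dist_set_lip HM Dy0 (Ljoin b v) w; have := Ldist_triangle HM (Ljoin b v) v w.
have := dist_join_le HM HAA b v; have := Ldist_triangle HM (Lmeet b v) (Lmeet b w) b.
have := Lmeet_lipr HM b v w; have := Ldist_ge0 HM (Lmeet b w) b.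
have := Ldist_ge0 HM v w; rewrite /v; lra.
Qed.

Hypothesis eps_gt0 : 0 < eps.

Lemma inf_between_step b' : ~ I b' ->
  forall p c, step_value H (2 / eps) (2 * (1 + 2 / eps)) 4 b b' p c <= 0.
Proof.
move=> Ib' p c; rewrite /step_value (inf_between_out Ib').
have Hc_ge0 := inf_between_ge0 c; have d_ge0 := Ldist_ge0 HM c (Ladd p (Lone M)).
have bp_ge0 := Ldist_ge0 HM (Lmeet b p) b; have Hp_le := inf_between_le_dist p.
have L_ge0 : 0 <= 2 / eps by rewrite divr_ge0 // ltW.
have := mulr_ge0 L_ge0 Hc_ge0; have := mulr_ge0 L_ge0 d_ge0.
have [Ip|Ip] := classic (I p); last by rewrite (inf_between_out Ip); lra.
have [bp_ge|bp_lt] := leP (1 / 2) (dist (Lmeet b p) b); first lra.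
have Hp_le2 : H p <= 2 by lra.
have far_succ : eps <= H (Ladd p (Lone M)).
  by apply: inf_between_far (I_succ Ip) _; have := dist_meet_succ_le HM HAA b p; lra.
have := lipschitz_step_le0 eps_gt0 (ler0n _ 2) Hp_le2 far_succ
  (inf_between_lip c (Ladd p (Lone M))); lra.
Qed.

End Far.

Lemma thicken_meets_cut_above eps : 0 < eps -> exists v, [/\ I v, thicken D eps v & Mle b v].
Proof.
move=> eps_gt0; apply: NNPP => no_v.
have far v : I v -> Mle b v -> eps <= dist_set v D.
  move=> Iv le_bv; rewrite leNgt; apply/negP => lt_eps; apply: no_v; exists v; split => //.
have L_ge0 : 0 <= 2 / eps by rewrite divr_ge0 // ltW.
have [le_by1 _] := I_below Ib Iy1.
have := AA_overspill (@inf_between_form_rename phi) (@inf_between_form_antitone phi) HM HAA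
  L_ge0 le_by1 (inf_between_step far eps_gt0 Iy1).
rewrite (inf_between_out Iy1).
have := inf_between_far far Ib; rewrite (Mmeetxx HM HAA) Ldistxx // => /(_ ltr01); lra.
Qed.

End InfBetween.
End CutAndDefinableSet.

Unset Implicit Arguments.

Theorem mainTheorem8 (M : Lpre) (HM : is_Lstructure M) (HAA : models_AA M)
  (I : set M) (HI : proper_cut I) (D : set M) (HD : formula_definable D) :
  ((forall y : M, ~ I y -> Mle (Lone M) y) ->
   (forall y : M, ~ I y -> D y) ->
   forall eps : R, 0 < eps ->
     exists a : M, I a /\ (forall u : M, Mle a u -> thicken D eps u))
  /\
  ((forall x y : M, I x -> ~ I y -> Mlt x y) ->
   (forall a : M, ~ I a -> exists u : M, [/\ ~ I u, D u & Mle u a]) ->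
   forall (eps : R) (b : M), 0 < eps -> I b ->
     exists v : M, [/\ I v, thicken D eps v & Mle b v]).
Proof.
case: HI => -[[a0 Ia0] I_down I_succ] I_proper.
have [y1 Iy1] : exists y, ~ I y.
  apply: NNPP => all_in; apply: I_proper; apply/seteqP; split => // x _.
  by apply: NNPP => Ix; apply: all_in; exists x.
case: HD => _ [phi [e0 phi_dist]].
split.
-
  move=> _ out_D eps eps_gt0.
  exact: (thicken_contains_tail HM HAA I_down I_succ Ia0 Iy1 (out_D y1 Iy1) phi_dist out_D
    eps_gt0).
- move=> I_below D_coinitial eps b eps_gt0 Ib.
  have [u [_ Du _]] := D_coinitial y1 Iy1.
  exact: (thicken_meets_cut_above HM HAA I_down I_succ Iy1 Du phi_dist Ib I_below D_coinitial
    eps_gt0).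
Qed.
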